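(* Let $M=[a_{pq},b_{pq}]_{p=1,\dots,n;\,q=1,\dots,m}$ be a 2-person normal form game matrix, and fix $i\in\{1,\dots,n\}$ and $j\in\{1,\dots,m\}$. Let $x_1,\dots,x_m$ and $y_1,\dots,y_n$ be real numbers with $x_j=y_i$. Then there exists a unique 2-person normal form game matrix $\widehat M=[\hat a_{pq},\hat b_{pq}]$ of dimensions $n\times m$ such that $\widehat M$ can be obtained from $M$ by an OI-transformation, $\hat a_{iq}=x_q$ for all $q\le m$, and $\hat a_{pj}=y_p$ for all $p\le n$.
   Context: A 2-person normal form game matrix of dimensions $n\times m$ is $M=[a_{ij},b_{ij}]_{i\le n,\,j\le m}$, where $(a_{ij},b_{ij})\in\mathbb{R}^2$ are the payoffs of the row player $A$ and column player $B$ when $A$ plays strategy $A_i$ and $B$ plays $B_j$. A preplay offer by $A$ to $B$ of amount $\delta\ge 0$ contingent on $B_j$ replaces $(a_{ij},b_{ij})$ by $(a_{ij}-\delta,b_{ij}+\delta)$ for every $i$ (other entries unchanged); a preplay offer by $B$ to $A$ of amount $\delta\ge0$ contingent on $A_i$ replaces $(a_{ij},b_{ij})$ by $(a_{ij}+\delta,b_{ij}-\delta)$ for every $j$. Each such map is a POI-transformation; an OI-transformation is a composition of finitely many POI-transformations (all amounts non-negative). *)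

(* Payoffs live in an arbitrary real field R
   (the paper's case is the real numbers). *)
From HB Require Import structures.
From mathcomp Require Import all_boot all_order all_algebra.
Set Implicit Arguments. Unset Strict Implicit. Unset Printing Implicit Defensive.
Import Order.TTheory GRing.Theory Num.Theory.
Local Open Scope ring_scope.

(* A 2-person n x m game matrix: (payoff matrix of A, payoff matrix of B);
   row p <-> strategy A_p, column q <-> strategy B_q. *)
Definition game (R : realFieldType) (n m : nat) : Type :=
  ('M[R]_(n, m) * 'M[R]_(n, m))%type.

(* Preplay offer by A to B of amount d contingent on B_j. *)
Definition offerA (R : realFieldType) (n m : nat) (j : 'I_m) (d : R)
  (G : game R n m) : game R n m :=
  (\matrix_(p < n, q < m) (G.1 p q - (if q == j then d else 0)),
   \matrix_(p < n, q < m) (G.2 p q + (if q == j then d else 0))).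

(* Preplay offer by B to A of amount d contingent on A_i. *)
Definition offerB (R : realFieldType) (n m : nat) (i : 'I_n) (d : R)
  (G : game R n m) : game R n m :=
  (\matrix_(p < n, q < m) (G.1 p q + (if p == i then d else 0)),
   \matrix_(p < n, q < m) (G.2 p q - (if p == i then d else 0))).

Inductive POI (R : realFieldType) (n m : nat) (G : game R n m) : game R n m -> Prop :=
  | POI_A (j : 'I_m) (d : R) : 0 <= d -> POI G (offerA j d G)
  | POI_B (i : 'I_n) (d : R) : 0 <= d -> POI G (offerB i d G).

Inductive OI (R : realFieldType) (n m : nat) (G : game R n m) : game R n m -> Prop :=
  | OI_refl : OI G G
  | OI_step (G1 G2 : game R n m) : OI G G1 -> POI G1 G2 -> OI G G2.

(* The game [M] is fixed; every OI-transformation of it only moves money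
   between the players, so all games reachable from [M] have the form
     [transfer M a b] = ( M.1 - a_q + b_p , M.2 + a_q - b_p ),
   where [a q] is the net amount A has offered to B contingent on B_q and
   [b p] the net amount B has offered to A contingent on A_p.

   - Transfers compose additively and a single preplay offer is a transfer
     concentrated on one column or one row; hence every game reachable from
     [M] is a transfer of [M] ([OI_transfer]), and conversely every transfer
     with nonnegative amounts is reachable, by making the offers one
     strategy at a time ([transfer_OI]).
   - Uniqueness: the row [i] and the column [j] of A's payoff determine all
     the differences [b p - a q], hence the whole transfer
     ([transfer_determined]).
   - Existence: the prescribed row and column are realised by an explicit
     choice of [a] and [b], shifted by a common constant [t] large enough to
     make all amounts nonnegative ([finite_upper_bound]). *)
From HB Require Import structures.
From mathcomp Require Import all_boot all_order all_algebra.
From mathcomp Require Import lra.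
Import Order.TTheory GRing.Theory Num.Theory.
Set Implicit Arguments. Unset Strict Implicit.
Local Open Scope ring_scope.

Lemma finite_upper_bound (R : realFieldType) (I : finType) (f : I -> R) :
  exists t, forall k, f k <= t.
Proof.
exists (\sum_k `|f k|) => k; apply: le_trans (ler_norm _) _.
rewrite (bigD1 k) //= lerDl; exact: sumr_ge0.
Qed.

Section Transfers.

Variables (R : realFieldType) (n m : nat).
Implicit Types (G M : game R n m) (a : {ffun 'I_m -> R}) (b : {ffun 'I_n -> R}).

Definition transfer G a b : game R n m :=
  (\matrix_(p < n, q < m) (G.1 p q - a q + b p),
   \matrix_(p < n, q < m) (G.2 p q + a q - b p)).

Definition single_offer (I : finType) (k : I) (d : R) : {ffun I -> R} :=
  [ffun l => if l == k then d else 0].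

Lemma transfer0 G : transfer G 0 0 = G.
Proof.
by case: G => A B; congr (_, _); apply/matrixP => p q; rewrite !mxE !ffunE /=;
  lra.
Qed.

Lemma transfer_comp G a b a' b' :
  transfer (transfer G a b) a' b' = transfer G (a + a') (b + b').
Proof.
by congr (_, _); apply/matrixP => p q; rewrite !mxE !ffunE /=; lra.
Qed.

Lemma offerA_transfer G (j : 'I_m) d :
  offerA j d G = transfer G (single_offer j d) 0.
Proof.
by congr (_, _); apply/matrixP => p q; rewrite !mxE !ffunE /=; case: (q == j);
  lra.
Qed.

Lemma offerB_transfer G (i : 'I_n) d :
  offerB i d G = transfer G 0 (single_offer i d).
Proof.
by congr (_, _); apply/matrixP => p q; rewrite !mxE !ffunE /=; case: (p == i);
  lra.
Qed.

Lemma sum_single_offers (I : finType) (c : {ffun I -> R}) :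
  c = \sum_k single_offer k (c k).
Proof.
apply/ffunP => l; rewrite sum_ffunE (bigD1 l) //= ffunE eqxx big1 ?addr0 //.
by move=> k; rewrite ffunE eq_sym => /negbTE ->.
Qed.

Lemma OI_trans G1 G2 G3 : OI G1 G2 -> OI G2 G3 -> OI G1 G3.
Proof. by move=> H12; elim=> [|G G' _ IH P] //; exact: OI_step IH P. Qed.

Lemma OI_transfer M G : OI M G -> exists a b, G = transfer M a b.
Proof.
elim=> [|G1 G2 _ [a [b ->]] [j d _|i d _]].
- by exists 0, 0; rewrite transfer0.
- by exists (a + single_offer j d), b; rewrite offerA_transfer transfer_comp addr0.
- by exists a, (b + single_offer i d); rewrite offerB_transfer transfer_comp addr0.
Qed.

Lemma transfer_cols_OI G a : (forall q, 0 <= a q) -> OI G (transfer G a 0).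
Proof.
move=> a_ge0; rewrite [a]sum_single_offers.
elim: (index_enum _) => [|q s IH]; first by rewrite big_nil transfer0; exact: OI_refl.
rewrite big_cons addrC -[X in transfer _ _ X]addr0 -transfer_comp.
by rewrite -offerA_transfer; exact: OI_step IH (POI_A _ q (a_ge0 q)).
Qed.

Lemma transfer_rows_OI G b : (forall p, 0 <= b p) -> OI G (transfer G 0 b).
Proof.
move=> b_ge0; rewrite [b]sum_single_offers.
elim: (index_enum _) => [|p s IH]; first by rewrite big_nil transfer0; exact: OI_refl.
rewrite big_cons addrC -[X in transfer _ X _]addr0 -transfer_comp.
by rewrite -offerB_transfer; exact: OI_step IH (POI_B _ p (b_ge0 p)).
Qed.

Lemma transfer_OI G a b :
  (forall q, 0 <= a q) -> (forall p, 0 <= b p) -> OI G (transfer G a b).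
Proof.
move=> a_ge0 b_ge0; apply: OI_trans (transfer_cols_OI G a_ge0) _.
have -> : transfer G a b = transfer (transfer G a 0) 0 b.
  by rewrite transfer_comp addr0 add0r.
exact: transfer_rows_OI.
Qed.

Lemma transfer_determined G (i : 'I_n) (j : 'I_m) a b a' b' :
  (forall q, (transfer G a b).1 i q = (transfer G a' b').1 i q) ->
  (forall p, (transfer G a b).1 p j = (transfer G a' b').1 p j) ->
  transfer G a b = transfer G a' b'.
Proof.
move=> row_i col_j.
have row q : a q - b i = a' q - b' i by have := row_i q; rewrite !mxE; lra.
have col p : b p - a j = b' p - a' j by have := col_j p; rewrite !mxE; lra.
have diff p q : b p - a q = b' p - a' q.
  by have := row q; have := row j; have := col p; lra.
by congr (_, _); apply/matrixP => p q; rewrite !mxE; have := diff p q; lra.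
Qed.

End Transfers.

Theorem theorem2 (R : realFieldType) (n m : nat) (M : game R n m)
  (i : 'I_n) (j : 'I_m) (x : 'I_m -> R) (y : 'I_n -> R) :
  x j = y i ->
  exists! Mh : game R n m,
    OI M Mh /\ (forall q : 'I_m, Mh.1 i q = x q) /\ (forall p : 'I_n, Mh.1 p j = y p).
Proof.
move=> xj_yi.
have [t1 t1_ub] := finite_upper_bound (fun q => x q - M.1 i q).
have [t2 t2_ub] := finite_upper_bound (fun p => x j - y p + M.1 p j - M.1 i j).
pose t := Num.max t1 t2.
have [t1_le t2_le] : t1 <= t /\ t2 <= t by rewrite !le_max !lexx orbT.
pose a := [ffun q => M.1 i q + t - x q].
pose b := [ffun p => y p - M.1 p j + M.1 i j + t - x j].
have row_i q : (transfer M a b).1 i q = x q by rewrite !mxE !ffunE xj_yi; lra.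
have col_j p : (transfer M a b).1 p j = y p by rewrite !mxE !ffunE; lra.
exists (transfer M a b); split.
  split; last by split.
  apply: transfer_OI => [q|p]; rewrite ffunE.
    by have := t1_ub q; lra.
  by have := t2_ub p; lra.
move=> _ [/OI_transfer [a' [b' ->]] [row_i' col_j']].
apply: (transfer_determined (i := i) (j := j)) => [q|p].
  by rewrite row_i row_i'.
by rewrite col_j col_j'.
Qed.
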